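(* Let $n\geq 1$, let $p$ be a prime, let $R\subset E_n=\{1,\dots,n\}$ and let $S\subset E_n$ be a nonempty subset. Then there exists exactly one subset $T\subset E_n$ such that $T$ is $(R,S)$-admissible and $T$ is $i$-positive for every $i\in S$. Equivalently, there exists a unique positive admissible homogeneous $S$-adapted $p$-cone, namely $\{x\in\mathbb{Z}^n : F^{(i)}_T(x)\leq 0 \text{ for all } i\in S\}$ for this $T$.
   Context: Indices of tuples $x=(x_1,\dots,x_n)\in\mathbb{Z}^n$ and elements of $E_n$ are taken modulo $n$ (e.g. $x_{n+1}=x_1$, and $0$ denotes $n$). For $T\subset E_n$ and $i\in E_n$ put $\delta_T^{(i)}=-1$ if $i\in T$ and $\delta_T^{(i)}=1$ if $i\notin T$. For $d\in E_n$ and $T\subset E_n$, the $p$-expression with starting index $d$ is the linear form $F^{(d)}_T(x)=\sum_{i=0}^{n-1}p^i\,\delta_T^{(d+i)}\,x_{d+i}$ on $\mathbb{Z}^n$. An $S$-adapted $p$-cone is a cone of the form $\{x\in\mathbb{Z}^n: F^{(i)}_{T^{(i)}}(x)\leq 0 \ \forall i\in S\}$ attached to a family $(T^{(i)})_{i\in S}$ of subsets of $E_n$; it is homogeneous if all $T^{(i)}$ equal a common $T$ (so homogeneous $S$-adapted $p$-cones are parametrized by subsets $T$). A subset $T\subset E_n$ is $(R,S)$-admissible if for every $i\in E_n$ with $i+1\notin S$: if $i\notin R$ then exactly one of $i,i+1$ lies in $T$, and if $i\in R$ then either both or neither of $i,i+1$ lie in $T$. For $i\in E_n$, $T$ is $i$-positive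 if ($i-1\in T \iff i-1\in R$). An $S$-adapted $p$-cone is admissible (resp. positive) if each $T^{(i)}$ is $(R,S)$-admissible (resp. $i$-positive). *)

From mathcomp Require Import all_boot all_order all_algebra.
Set Implicit Arguments. Unset Strict Implicit. Unset Printing Implicit Defensive.

(* E_n = {1,...,n} is modelled by 'I_n = {0,...,n-1} (element k+1 <-> k).
   Indices are cyclic: i+1 is [ordS i] (= i.+1 %% n), i-1 is [ord_pred i]. *)

Definition admissible n (R S T : {set 'I_n}) : Prop :=
  forall i : 'I_n, ordS i \notin S ->
    if i \in R then (i \in T) = (ordS i \in T)
    else (i \in T) != (ordS i \in T).

Definition i_positive n (R T : {set 'I_n}) (i : 'I_n) : Prop :=
  (ord_pred i \in T) = (ord_pred i \in R).

Open Scope ring_scope.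
Definition delta n (T : {set 'I_n}) (i : 'I_n) : int := if i \in T then -1 else 1.
Definition iter_ordS n (d : 'I_n) (k : nat) : 'I_n := iter k (@ordS n) d.
Definition pexpr n (p : nat) (T : {set 'I_n}) (d : 'I_n) (x : 'I_n -> int) : int :=
  \sum_(k < n) (p ^ k)%:Z * delta T (iter_ordS d k) * x (iter_ordS d k).
Definition hom_cone n (p : nat) (S T : {set 'I_n}) : (('I_n -> int) -> Prop) :=
  fun x => forall i, i \in S -> pexpr p T i x <= 0.
Close Scope ring_scope.

(* The conditions on T form a system of n equations over GF(2) in the n
   unknowns [k \in T], one equation per index k: if k+1 \in S it fixes
   [k \in T] (positivity at k+1), otherwise it fixes [k \in T] xor
   [k+1 \in T] (admissibility at k).  Recording the violated equations of T
   gives a map [defect] from {set 'I_n} to itself, and T is a solution iff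
   its defect is empty.  This map is injective: where two sets differ, they
   also differ one step further round the cycle unless that step lands in S,
   where they must agree; as S is nonempty every walk round the cycle meets
   S.  An injective self-map of a finite type is bijective, so exactly one T
   has empty defect. *)
From mathcomp Require Import all_boot all_order all_algebra.
From mathcomp Require Import zify.

Set Implicit Arguments.
Unset Strict Implicit.
Unset Printing Implicit Defensive.

Lemma val_iter_ordS n (k : 'I_n) m : val (iter m (@ordS n) k) = (k + m) %% n.
Proof.
elim: m => [|m IH] /=; first by rewrite addn0 modn_small.
by rewrite IH addnS -addn1 modnDml addn1.
Qed.

Lemma iter_ordS_reaches n (k s : 'I_n) : exists m, iter m.+1 (@ordS n) k = s.
Proof.
exists (n - k.+1 + s); apply: val_inj; rewrite val_iter_ordS.
have lt_k := ltn_ord k; have lt_s := ltn_ord s.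
have -> : k + (n - k.+1 + s).+1 = n + s by lia.
by rewrite -modnDml modnn add0n modn_small.
Qed.

Lemma cyclic_propagation_false n (S : {set 'I_n}) (D : pred 'I_n) :
    S != set0 ->
    (forall k, ordS k \in S -> D k = false) ->
    (forall k, ordS k \notin S -> D (ordS k) = D k) ->
  forall k, D k = false.
Proof.
move=> /set0Pn [s s_in_S] D_before_S D_step k; apply/negP => Dk.
have walk m : D (iter m (@ordS n) k) && (iter m.+1 (@ordS n) k \notin S).
  elim: m => [|m /andP [Dm notS]] /=.
    by apply/andP; split=> //; apply/negP => /D_before_S; rewrite Dk.
  have Dm1 := D_step _ notS; rewrite Dm in Dm1.
  by apply/andP; split=> //; apply/negP => /D_before_S; rewrite Dm1.
have [m reach_s] := iter_ordS_reaches k s.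
by have /andP [_] := walk m; rewrite reach_s s_in_S.
Qed.

Lemma injF_exists_unique (T : finType) (f : T -> T) :
  injective f -> forall y, exists! x, f x = y.
Proof.
move=> f_inj y; have [g _ gK] := injF_bij f_inj.
by exists (g y); split=> [|x <-]; [rewrite gK | apply: f_inj; rewrite gK].
Qed.

Section Defect.

Variables (n : nat) (R S : {set 'I_n}).

Definition defect (T : {set 'I_n}) : {set 'I_n} :=
  [set k | if ordS k \in S then (k \in T) (+) (k \in R)
           else ~~ ((k \in T) (+) (ordS k \in T) (+) (k \in R))].

Lemma defect_eq0 T :
  defect T = set0 <->
  admissible R S T /\ (forall i, i \in S -> i_positive R T i).
Proof.
split=> [no_defect | [adm pos]].
  have ok k : k \notin defect T by rewrite no_defect inE.
  split=> [i notS | i i_in_S].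
    by move: (ok i); rewrite inE (negbTE notS); case: (i \in R);
      case: (i \in T); case: (ordS i \in T).
  by move: (ok (ord_pred i)); rewrite inE ord_predK i_in_S /i_positive;
    case: (ord_pred i \in T); case: (ord_pred i \in R).
apply/setP => k; rewrite !inE; case: ifPn => [kS | notS].
  by move: (pos _ kS); rewrite /i_positive ordSK => ->; rewrite addbb.
by move: (adm k notS); case: (k \in R); case: (k \in T); case: (ordS k \in T).
Qed.

Lemma defect_inj : S != set0 -> injective defect.
Proof.
move=> S_neq0 T1 T2 /setP same_defect.
suff differ_nowhere k : ((k \in T1) != (k \in T2)) = false.
  by apply/setP => k; apply/eqP/negbFE/differ_nowhere.
apply: (cyclic_propagation_false (D := fun k => (k \in T1) != (k \in T2)) S_neq0)
  => {}k.
  move=> kS; move: (same_defect k); rewrite !inE kS.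
  by case: (k \in T1); case: (k \in T2); case: (k \in R).
move=> /negbTE notS; move: (same_defect k); rewrite !inE notS.
by case: (k \in T1); case: (k \in T2); case: (k \in R);
  case: (ordS k \in T1); case: (ordS k \in T2).
Qed.

End Defect.

Theorem theoremA (n : nat) (hn : 0 < n) (p : nat) (hp : prime p)
    (R S : {set 'I_n}) (hS : S != set0) :
  exists! T : {set 'I_n},
    admissible R S T /\ (forall i : 'I_n, i \in S -> i_positive R T i).
Proof.
have [T [defect_T unique_T]] := injF_exists_unique (defect_inj (R := R) hS) set0.
exists T; split=> [|T' /defect_eq0 defect_T']; first exact/defect_eq0.
exact: unique_T.
Qed.
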